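(* Let $Q$ be a measure on a measurable space $\mathcal{X}$, let $\beta>0$, and let $l,\tilde l:\mathcal{X}\to\mathbb{R}$ be measurable functions such that $0<\int e^{-\beta l}\,dQ<\infty$ and $0<\int e^{-\beta\tilde l}\,dQ<\infty$. Let $P(dx)\propto Q(dx)e^{-\beta l(x)}$ and $\tilde P(dx)\propto Q(dx)e^{-\beta\tilde l(x)}$ be the corresponding Gibbs probability measures. If $\sup_{x}|l(x)-\tilde l(x)|\le\epsilon$, then \[ D_{\mathrm{KL}}(P\|\tilde P)\le2\beta\epsilon\cdot\left\{1\wedge\left(e^{2\beta\epsilon}-1\right)\right\}. \]
   Context: $D_{\mathrm{KL}}$ denotes the Kullback–Leibler divergence (natural logarithm) and $a\wedge b=\min(a,b)$. *)

From HB Require Import structures.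
From mathcomp Require Import all_boot all_order all_algebra.
From mathcomp Require Import all_classical all_reals all_analysis.
Set Implicit Arguments. Unset Strict Implicit. Unset Printing Implicit Defensive.
Import Order.TTheory GRing.Theory Num.Theory.
Local Open Scope ring_scope.
Local Open Scope ereal_scope.

Definition gibbs_Z (R : realType) (d : measure_display) (T : measurableType d)
  (Q : {measure set T -> \bar R}) (beta : R) (l : T -> R) : \bar R :=
  \int[Q]_x (expR (- beta * l x))%:E.

Definition gibbs_density (R : realType) (d : measure_display) (T : measurableType d)
  (Q : {measure set T -> \bar R}) (beta : R) (l : T -> R) : T -> R :=
  fun x => (expR (- beta * l x) / fine (gibbs_Z Q beta l))%R.

(* KL divergence D_KL(P || P') of P = p dQ and P' = p' dQ, natural log:
   \int p ln(p / p') dQ. *)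
Definition KL_dens (R : realType) (d : measure_display) (T : measurableType d)
  (Q : {measure set T -> \bar R}) (p q : T -> R) : \bar R :=
  \int[Q]_x ((p x * ln (p x / q x))%R)%:E.

From HB Require Import structures.
From mathcomp Require Import all_boot all_order all_algebra.
From mathcomp Require Import all_classical all_reals all_analysis.
From mathcomp Require Import ring lra measurable_realfun.
Set Implicit Arguments. Unset Strict Implicit. Unset Printing Implicit Defensive.
Import Order.TTheory GRing.Theory Num.Theory.
Local Open Scope ring_scope.
Local Open Scope ereal_scope.

(* Write P = e^t P~ with t = beta (l~ - l) + ln (Z~ / Z), so that |t| <= 2 beta eps
   and D_KL(P || P~) = E_P[t].  This is at most a := 2 beta eps; and since
   t e^t <= a (e^a - 1) + e^t - 1 whenever |t| <= a, integrating against P~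
   (where E[e^t] = 1) also gives E_P[t] <= a (e^a - 1). *)

Lemma mulr_expR_le (R : realType) (a t : R) : (`|t| <= a)%R ->
  (t * expR t <= a * (expR a - 1) + expR t - 1)%R.
Proof.
move=> ta; have t1 := expR_ge1Dx t.
suff : ((expR t - 1) * t <= a * (expR a - 1))%R by nra.
have [t0|t0] := leP 0%R t.
  have ht : (t <= a)%R by move: ta; rewrite ger0_norm.
  have : (expR t <= expR a)%R by rewrite ler_expR.
  nra.
have ht : (- t <= a)%R by move: ta; rewrite ltr0_norm.
have : (expR (- a) <= expR t)%R by rewrite ler_expR lerNl.
have : (expR t <= 1)%R by rewrite -expR0 ler_expR ltW.
have : (1 - expR (- a) <= expR a - 1)%R.
  by have := expR_ge1Dx a; have := expR_ge1Dx (- a); lra.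
nra.
Qed.

Lemma ge0_integrable (R : realType) (d : measure_display) (T : measurableType d)
    (Q : {measure set T -> \bar R}) (f : T -> R) :
  measurable_fun setT f -> (forall x, 0 <= f x)%R ->
  \int[Q]_x (f x)%:E < +oo -> Q.-integrable setT (EFin \o f).
Proof.
move=> mf f0 fint; apply/integrableP; split; first exact/measurable_EFinP.
by rewrite (eq_integral (fun x => (f x)%:E)) // => x _; rewrite gee0_abs ?lee_fin.
Qed.

Section KL_bounded_log_ratio.
Variables (R : realType) (d : measure_display) (T : measurableType d).
Variables (Q : {measure set T -> \bar R}) (p q t : T -> R) (a : R).
Hypothesis mq : measurable_fun setT q.
Hypothesis mt : measurable_fun setT t.
Hypothesis q_gt0 : forall x, (0 < q x)%R.
Hypothesis p_expR : forall x, p x = (q x * expR (t x))%R.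
Hypothesis int_p : \int[Q]_x (p x)%:E = 1.
Hypothesis int_q : \int[Q]_x (q x)%:E = 1.
Hypothesis t_le : forall x, (`|t x| <= a)%R.

Let p_ge0 x : (0 <= p x)%R.
Proof. by rewrite p_expR mulr_ge0 ?expR_ge0 ?ltW. Qed.

Let mp : measurable_fun setT p.
Proof. by rewrite (funext p_expR); apply: measurable_funM => //; exact: measurableT_comp. Qed.

Let ip : Q.-integrable setT (EFin \o p).
Proof. by apply: ge0_integrable => //; rewrite int_p ltry. Qed.

Let iq : Q.-integrable setT (EFin \o q).
Proof. by apply: ge0_integrable => [//|x|]; rewrite ?int_q ?ltry ?ltW. Qed.

Lemma KL_dens_expR_ratio : KL_dens Q p q = \int[Q]_x (p x * t x)%:E.
Proof.
apply: eq_integral => x _; congr (_ * _)%:E.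
by rewrite p_expR mulrAC divff ?mul1r ?expRK // gt_eqF.
Qed.

Let a_ge0 (x : T) : (0 <= a)%R. Proof. exact: le_trans (normr_ge0 _) (t_le x). Qed.

Let ipt : Q.-integrable setT (fun x => (p x * t x)%:E).
Proof.
apply: (le_integrable measurableT _ _ (integrableZl measurableT a ip)).
  exact/measurable_EFinP/measurable_funM.
move=> x _; rewrite -[_ * (EFin \o p) x]EFinM !abse_EFin lee_fin !normrM.
by rewrite (ger0_norm (p_ge0 x)) (ger0_norm (a_ge0 x)) mulrC ler_wpM2r.
Qed.

Lemma KL_dens_le_sup_log_ratio : KL_dens Q p q <= a%:E.
Proof.
rewrite KL_dens_expR_ratio -[leRHS]mule1 -int_p -integralZl //.
apply: le_integral ipt (integrableZl measurableT a ip) _ => // x _.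
rewrite -EFinM lee_fin mulrC ler_wpM2r //.
exact: le_trans (ler_norm _) (t_le x).
Qed.

Lemma KL_dens_le_mul_expR : KL_dens Q p q <= (a * (expR a - 1))%:E.
Proof.
set K := (a * (expR a - 1))%R.
have iKq := integrableZl measurableT K iq.
have ipq := integrableB measurableT ip iq.
rewrite KL_dens_expR_ratio.
apply: le_trans (le_integral measurableT ipt (integrableD measurableT iKq ipq) _) _.
  move=> x _; rewrite /= -EFinM -EFinB -EFinD lee_fin p_expR -mulrA.
  have := ler_wpM2l (ltW (q_gt0 x)) (mulr_expR_le (t_le x)).
  by rewrite /K; lra.
by rewrite integralD // integralB // integralZl // int_p int_q mule1 subee ?adde0.
Qed.

Lemma KL_dens_le_min : KL_dens Q p q <= (a * Num.min 1 (expR a - 1))%:E.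
Proof.
have [_|_] := leP 1%R (expR a - 1)%R.
  by rewrite mulr1 KL_dens_le_sup_log_ratio.
exact: KL_dens_le_mul_expR.
Qed.

End KL_bounded_log_ratio.

Section gibbs_measure.
Variables (R : realType) (d : measure_display) (T : measurableType d).
Variables (Q : {measure set T -> \bar R}) (beta : R) (l : T -> R).
Hypothesis ml : measurable_fun setT l.

Lemma measurable_gibbs_weight : measurable_fun setT (fun x => expR (- beta * l x)).
Proof. by apply: measurableT_comp => //; exact: measurable_funM. Qed.

Hypothesis Z_gt0_fin : 0 < gibbs_Z Q beta l < +oo.

Lemma gibbs_ZE : gibbs_Z Q beta l = (fine (gibbs_Z Q beta l))%:E.
Proof. by case/andP: Z_gt0_fin => Z0 Zoo; rewrite fineK // ge0_fin_numE ?ltW. Qed.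

Lemma fine_gibbs_Z_gt0 : (0 < fine (gibbs_Z Q beta l))%R.
Proof. by rewrite -lte_fin -gibbs_ZE; case/andP: Z_gt0_fin. Qed.

Lemma gibbs_density_gt0 x : (0 < gibbs_density Q beta l x)%R.
Proof. by rewrite divr_gt0 ?expR_gt0 ?fine_gibbs_Z_gt0. Qed.

Lemma measurable_gibbs_density : measurable_fun setT (gibbs_density Q beta l).
Proof. exact: measurable_funM measurable_gibbs_weight (measurable_cst _). Qed.

Lemma integral_gibbs_density : \int[Q]_x (gibbs_density Q beta l x)%:E = 1.
Proof.
have Z0 := fine_gibbs_Z_gt0.
under eq_integral => x _ do rewrite /gibbs_density mulrC EFinM.
rewrite ge0_integralZl ?lee_fin ?invr_ge0 ?ltW //.
- by rewrite -/(gibbs_Z Q beta l) gibbs_ZE -EFinM mulVf // gt_eqF.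
- exact/measurable_EFinP/measurable_gibbs_weight.
Qed.

End gibbs_measure.

Lemma gibbs_Z_le (R : realType) (d : measure_display) (T : measurableType d)
    (Q : {measure set T -> \bar R}) (beta eps : R) (l lt : T -> R) :
  (0 <= beta)%R -> measurable_fun setT l -> measurable_fun setT lt ->
  (forall x, l x - lt x <= eps)%R ->
  gibbs_Z Q beta lt <= (expR (beta * eps))%:E * gibbs_Z Q beta l.
Proof.
move=> beta0 ml mlt le_eps.
have mw (f : T -> R) : measurable_fun setT f ->
    measurable_fun setT (fun x => (expR (- beta * f x))%:E).
  by move=> mf; apply/measurable_EFinP; exact: measurable_gibbs_weight.
rewrite /gibbs_Z -ge0_integralZl ?lee_fin ?expR_ge0 //; last exact: mw.
apply: ge0_le_integral => //; [exact: mw | exact/measurable_funeM/mw |].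
move=> x _; rewrite -EFinM lee_fin -expRD ler_expR.
by have := ler_wpM2l beta0 (le_eps x); lra.
Qed.

Section gibbs_pair.
Variables (R : realType) (d : measure_display) (T : measurableType d).
Variables (Q : {measure set T -> \bar R}) (beta eps : R) (l lt : T -> R).
Hypothesis beta_ge0 : (0 <= beta)%R.
Hypotheses (ml : measurable_fun setT l) (mlt : measurable_fun setT lt).
Hypothesis Zl_gt0_fin : 0 < gibbs_Z Q beta l < +oo.
Hypothesis Zlt_gt0_fin : 0 < gibbs_Z Q beta lt < +oo.
Hypothesis l_lt_eps : forall x, (`|l x - lt x| <= eps)%R.

Let Z := fine (gibbs_Z Q beta l).
Let Zt := fine (gibbs_Z Q beta lt).
Let c := ln (Zt / Z).

Definition gibbs_log_ratio x : R := beta * (lt x - l x) + c.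

Lemma measurable_gibbs_log_ratio : measurable_fun setT gibbs_log_ratio.
Proof. by apply: measurable_funD => //; apply: measurable_funM => //; exact: measurable_funB. Qed.

Lemma gibbs_density_expR_ratio x : gibbs_density Q beta l x =
  (gibbs_density Q beta lt x * expR (gibbs_log_ratio x))%R.
Proof.
have Z0 : (0 < Z)%R by exact: fine_gibbs_Z_gt0.
have Zt0 : (0 < Zt)%R by exact: fine_gibbs_Z_gt0.
rewrite /gibbs_density /gibbs_log_ratio -/Z -/Zt expRD lnK ?posrE ?divr_gt0 //.
have -> : expR (- beta * l x) = (expR (- beta * lt x) * expR (beta * (lt x - l x)))%R.
  by rewrite -expRD; congr expR; ring.
by field; rewrite !gt_eqF.
Qed.

Lemma ln_gibbs_Z_ratio_le : (`|c| <= beta * eps)%R.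
Proof.
have Z0 : (0 < Z)%R by exact: fine_gibbs_Z_gt0.
have Zt0 : (0 < Zt)%R by exact: fine_gibbs_Z_gt0.
have epsl x : (l x - lt x <= eps)%R by have := l_lt_eps x; rewrite ler_norml => /andP[].
have epslt x : (lt x - l x <= eps)%R.
  by have := l_lt_eps x; rewrite distrC ler_norml => /andP[].
have := gibbs_Z_le Q beta_ge0 ml mlt epsl.
have := gibbs_Z_le Q beta_ge0 mlt ml epslt.
rewrite (gibbs_ZE Zl_gt0_fin) (gibbs_ZE Zlt_gt0_fin) -!EFinM !lee_fin -/Z -/Zt.
move=> ZleZt ZtleZ; have ec : expR c = (Zt / Z)%R by rewrite lnK ?posrE ?divr_gt0.
rewrite ler_norml; apply/andP; split; rewrite -ler_expR ec.
  by rewrite expRN ler_pdivlMr // mulrC ler_pdivrMr ?expR_gt0 // mulrC.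
by rewrite ler_pdivrMr.
Qed.

Lemma gibbs_log_ratio_le x : (`|gibbs_log_ratio x| <= 2 * beta * eps)%R.
Proof.
apply: le_trans (ler_normD _ _) _.
have : (`|beta * (lt x - l x)| <= beta * eps)%R.
  by rewrite normrM ger0_norm // distrC ler_wpM2l.
by have := ln_gibbs_Z_ratio_le; lra.
Qed.

End gibbs_pair.

Theorem lemma17 (R : realType) (d : measure_display) (T : measurableType d)
  (Q : {measure set T -> \bar R}) (beta eps : R) (l lt : T -> R) :
  (0 < beta)%R ->
  measurable_fun setT l -> measurable_fun setT lt ->
  0 < gibbs_Z Q beta l < +oo ->
  0 < gibbs_Z Q beta lt < +oo ->
  (forall x, `|l x - lt x| <= eps)%R ->
  KL_dens Q (gibbs_density Q beta l) (gibbs_density Q beta lt)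
    <= (2 * beta * eps * Num.min 1 (expR (2 * beta * eps) - 1))%:E.
Proof.
move=> beta0 ml mlt Zl Zlt l_lt_eps.
apply: (KL_dens_le_min (t := gibbs_log_ratio Q beta l lt)).
- exact: measurable_gibbs_density.
- exact: measurable_gibbs_log_ratio.
- exact: gibbs_density_gt0.
- exact: gibbs_density_expR_ratio.
- exact: integral_gibbs_density.
- exact: integral_gibbs_density.
- exact: (gibbs_log_ratio_le (ltW beta0)).
Qed.
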